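(* Let $A$ be an infinite alphabet. If $X \subseteq A^*$ is recognizable, then there exists an equivalence relation $\sim$ on $A$ of finite index such that $X = \pi_\sim^{-1}(\pi_\sim(X))$, where $\pi_\sim\colon A^* \to (A/{\sim})^*$ is the projection morphism of $\sim$.
   Context: $A^*$ denotes the free monoid of finite words over $A$. For an equivalence relation $\sim$ on $A$, the projection morphism $\pi_\sim\colon A^*\to (A/{\sim})^*$ is the monoid morphism sending each letter $a$ to its equivalence class $[a]_\sim$. A subset $S$ of a monoid $M$ is recognizable if there exist a finite monoid $N$, a monoid morphism $\varphi\colon M \to N$ and a subset $T \subseteq N$ with $S = \varphi^{-1}(T)$. *)

From Stdlib Require Lists.List.
From mathcomp Require Import all_boot.
Set Implicit Arguments. Unset Strict Implicit. Unset Printing Implicit Defensive.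

(* Words over A are [seq A] (= list A); A^* is the free monoid (seq A, ++, [::]). *)

Definition infinite_type (A : Type) : Prop :=
  forall s : seq A, exists a : A, ~ Stdlib.Lists.List.In a s.

Definition is_monoid (N : Type) (mul : N -> N -> N) (one : N) : Prop :=
  associative mul /\ left_id one mul /\ right_id one mul.

Definition free_monoid_morphism (A N : Type) (mul : N -> N -> N) (one : N)
  (phi : seq A -> N) : Prop :=
  phi [::] = one /\ forall u v : seq A, phi (u ++ v) = mul (phi u) (phi v).

Definition recognizable (A : Type) (X : seq A -> Prop) : Prop :=
  exists (N : finType) (mul : N -> N -> N) (one : N),
    is_monoid mul one /\
    exists (phi : seq A -> N) (T : N -> Prop),
      free_monoid_morphism mul one phi /\ forall w, X w <-> T (phi w).

Definition equivalence_relation (A : Type) (R : A -> A -> Prop) : Prop :=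
  (forall a, R a a) /\ (forall a b, R a b -> R b a) /\
  (forall a b c, R a b -> R b c -> R a c).

(* Q together with the surjection p : A -> Q is (a model of) the quotient
   A/R: p a = p b iff R a b, and every class is hit.  R has finite index iff
   such a quotient exists with Q finite. *)
Definition is_quotient (A Q : Type) (R : A -> A -> Prop) (p : A -> Q) : Prop :=
  (forall a b, R a b <-> p a = p b) /\ (forall q : Q, exists a, p a = q).

Definition proj_morphism (A Q : Type) (p : A -> Q) : seq A -> seq Q := map p.

Definition image_words (A B : Type) (f : seq A -> seq B) (X : seq A -> Prop)
  : seq B -> Prop := fun y => exists x, X x /\ f x = y.
Definition preimage_words (A B : Type) (f : seq A -> seq B) (Y : seq B -> Prop)
  : seq A -> Prop := fun x => Y (f x).

From mathcomp Require Import all_boot.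
From Stdlib Require Import ClassicalDescription.

Set Implicit Arguments.
Unset Strict Implicit.
Unset Printing Implicit Defensive.

(* Take for ~ the kernel of the letter map a |-> phi [:: a] of a recognizing
   morphism phi : A^* -> N.  Its classes embed into the finite monoid N, so ~
   has finite index, and phi u depends only on the projection of u; hence
   X = phi^-1(T) is a union of fibres of the projection.  The argument does
   not use that A is infinite. *)

Lemma morphism_congr_map (A B N : Type) (mul : N -> N -> N) (one : N)
    (phi : seq A -> N) (p : A -> B) :
  free_monoid_morphism mul one phi ->
  (forall a b, p a = p b -> phi [:: a] = phi [:: b]) ->
  forall u v, map p u = map p v -> phi u = phi v.
Proof.
move=> [_ phiM] phi_p; elim=> [|a u IHu] [|b v] //= [/phi_p eab /IHu euv].
by rewrite -cat1s phiM eab euv -phiM.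
Qed.

Lemma preimage_image_words_saturated (A B : Type) (f : seq A -> seq B)
    (X : seq A -> Prop) :
  (forall u v, f u = f v -> X u -> X v) ->
  forall w, X w <-> preimage_words f (image_words f X) w.
Proof. by move=> satX w; split=> [Xw | [u [Xu fuw]]]; [exists w | apply: satX Xu]. Qed.

Lemma kernel_equivalence (A N : Type) (f : A -> N) :
  equivalence_relation (fun a b => f a = f b).
Proof. by split=> [//|]; split=> [a b -> | a b c -> ->]. Qed.

Section FiniteImage.

Variables (A : Type) (N : finType) (f : A -> N).

Definition in_image (x : N) : bool :=
  if excluded_middle_informative (exists a, f a = x) then true else false.

Lemma in_imageP x : reflect (exists a, f a = x) (in_image x).
Proof. by rewrite /in_image; case: excluded_middle_informative; constructor. Qed.

Definition image_type : finType := {x : N | in_image x}.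

Definition to_image (a : A) : image_type :=
  exist _ (f a) (introT (in_imageP (f a)) (ex_intro _ a erefl)).

Lemma kernel_quotient : is_quotient (fun a b => f a = f b) to_image.
Proof.
split=> [a b | [x x_in]].
  by split=> [fab | /(f_equal val)//]; apply: val_inj.
have /in_imageP [a fax] := x_in.
by exists a; apply: val_inj.
Qed.

End FiniteImage.

Theorem proposition5 (A : Type) (X : seq A -> Prop) :
  infinite_type A ->
  recognizable X ->
  exists R : A -> A -> Prop,
    equivalence_relation R /\
    exists (Q : finType) (p : A -> Q),
      is_quotient R p /\
      forall w : seq A,
        X w <-> preimage_words (proj_morphism p) (image_words (proj_morphism p) X) w.
Proof.
move=> _ [N [mul [one [_ [phi [T [phi_morph Xdef]]]]]]].
pose letter a := phi [:: a].
exists (fun a b => letter a = letter b); split; first exact: kernel_equivalence.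
exists (image_type letter), (to_image letter).
split; first exact: kernel_quotient.
apply: preimage_image_words_saturated => u v puv /Xdef Xu; apply/Xdef.
have letter_congr a b : to_image letter a = to_image letter b -> letter a = letter b.
  by move/(f_equal val).
by rewrite -(morphism_congr_map phi_morph letter_congr puv).
Qed.
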